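(* Let $d=\mu_+-\mu_->0$. For every $\epsilon\in\left[0,\frac{d}{2}\right]$ and every $K\in\left(1,B_K(\epsilon)\right]$, where $$B_K(\epsilon)=\min\left\{\exp\!\left(\frac{(d-2\epsilon)^2}{2}\right),\ \frac{d}{\epsilon}-1\right\}$$ (with $d/\epsilon:=+\infty$ when $\epsilon=0$), the optimal fair, natural and robust thresholds satisfy $$\mu_-+\epsilon\;\le\;\theta_{\mathrm f}\;\le\;\theta^*\;\le\;\theta^{(\epsilon)}_{\mathrm r}\;\le\;\mu_+-\epsilon .$$ Moreover, for fixed $\mu_\pm$ and $K$, the map $\epsilon\mapsto\theta^{(\epsilon)}_{\mathrm r}$ is increasing on the set of $\epsilon\in\left[0,\frac d2\right]$ for which $K\le B_K(\epsilon)$.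
   Context: Setting (one-dimensional Gaussian mixture). Fix real numbers $\mu_-<\mu_+$ and $K>1$, and let $d=\mu_+-\mu_-$. Let $(X,Y)$ be a random pair with $\Pr(Y=1)=\Pr(Y=-1)=\tfrac12$, $X\mid Y=-1\sim\mathcal N(\mu_-,1)$, and $X\mid Y=1\sim\mathcal N(\mu_+,K^2)$ ($K^2$ is the variance). For $\theta\in\mathbb R$, the threshold classifier $f_\theta$ is given by $f_\theta(x)=1$ if $x>\theta$ and $f_\theta(x)=-1$ otherwise. The class-conditional error rates are $e_+(\theta)=\Pr(f_\theta(X)\ne 1\mid Y=1)=\Pr(X\le\theta\mid Y=1)$ and $e_-(\theta)=\Pr(f_\theta(X)\ne -1\mid Y=-1)=\Pr(X>\theta\mid Y=-1)$. The natural error is $R_{\mathrm{nat}}(\theta)=\Pr(f_\theta(X)\ne Y)=\tfrac12 e_+(\theta)+\tfrac12 e_-(\theta)$. For $\epsilon\ge 0$, the robust error is $R_{\mathrm{rob}}^{\epsilon}(\theta)=\Pr(\exists\tau,\ |\tau|\le\epsilon,\ f_\theta(X+\tau)\ne Y)=\tfrac12\Pr(X\le\theta+\epsilon\mid Y=1)+\tfrac12\Pr(X>\theta-\epsilon\mid Y=-1)$. Optimal models (all thresholds restricted to $[\mu_-,\mu_+]$): $\theta^*$ is the minimizer of $R_{\mathrm{nat}}$ over $[\mu_-,\mu_+]$ (the Bayes/natural classifier); $\theta_{\mathrm f}$ is the threshold in $[\mu_-,\mu_+]$ at which the class-conditional errors are equal, $e_+(\theta_{\mathrm f})=e_-(\theta_{\mathrm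 f})$ (the optimal accuracy-parity fair classifier, i.e. the lexicographic minimizer of first $|e_+(\theta)-e_-(\theta)|$ and then $R_{\mathrm{nat}}(\theta)$); $\theta^{(\epsilon)}_{\mathrm r}$ is the minimizer of $R^{\epsilon}_{\mathrm{rob}}$ over $[\mu_-,\mu_+]$ (the optimal robust classifier). *)

From Stdlib Require Import Reals.
From Coquelicot Require Import Coquelicot.
Open Scope R_scope.

Definition gauss_pdf (t : R) : R := exp (- t ^ 2 / 2) / sqrt (2 * PI).
Definition Phi (x : R) : R := 1 / 2 + RInt gauss_pdf 0 x.

(* X | Y=1 ~ N(mu_p, K^2), X | Y=-1 ~ N(mu_m, 1). *)
(* e_+(theta) = P(X <= theta | Y = 1) *)
Definition e_plus (mu_p K theta : R) : R := Phi ((theta - mu_p) / K).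
(* e_-(theta) = P(X > theta | Y = -1) *)
Definition e_minus (mu_m theta : R) : R := 1 - Phi (theta - mu_m).

Definition R_nat (mu_m mu_p K theta : R) : R :=
  / 2 * e_plus mu_p K theta + / 2 * e_minus mu_m theta.

(* robust error: 1/2 P(X <= theta+eps | Y=1) + 1/2 P(X > theta-eps | Y=-1) *)
Definition R_rob (mu_m mu_p K eps theta : R) : R :=
  / 2 * Phi ((theta + eps - mu_p) / K) + / 2 * (1 - Phi (theta - eps - mu_m)).

Definition is_min_on (f : R -> R) (a b x : R) : Prop :=
  a <= x <= b /\ forall y, a <= y <= b -> f x <= f y.

(* K <= B_K(eps) = min { exp((d-2eps)^2/2), d/eps - 1 }, with d/0 = +oo *)
Definition le_BK (d eps K : R) : Prop :=
  K <= exp ((d - 2 * eps) ^ 2 / 2) /\ (0 < eps -> K <= d / eps - 1).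

From Stdlib Require Import Reals Lra Psatz ssreflect.
From Coquelicot Require Import Coquelicot.
Open Scope R_scope.

(** The derivative of the robust error has the sign of the quadratic
    [Q_eps(th) = K^2 (th - mu_m - eps)^2 - (th + eps - mu_p)^2 - 2 K^2 ln K],
    whose leading coefficient [K^2 - 1] is positive.  The bound [K <= B_K(eps)]
    gives [Q_eps(mu_m) < 0 <= Q_eps(mu_p - eps)], so [Q_eps] has exactly one root
    to the right of [mu_m], lying in [(mu_m + eps, mu_p - eps]], and the robust error
    decreases before it and increases after it: the robust threshold is that root,
    and the natural one is the case [eps = 0].  The fair threshold solves
    [(th - mu_p) / K = mu_m - th], where [Q_0 = -2 K^2 ln K < 0], so it lies left of
    the natural one.  Finally the root moves right as [eps] grows. *)

Lemma sqrt_2PI_pos : 0 < sqrt (2 * PI).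
Proof. apply: sqrt_lt_R0; move: PI_RGT_0; lra. Qed.

Lemma gauss_pdf_pos t : 0 < gauss_pdf t.
Proof. apply: Rdiv_lt_0_compat; [exact: exp_pos | exact: sqrt_2PI_pos]. Qed.

Lemma gauss_pdf_opp t : gauss_pdf (- t) = gauss_pdf t.
Proof. by rewrite /gauss_pdf -[(- t) ^ 2]Rsqr_pow2 -Rsqr_neg Rsqr_pow2. Qed.

Lemma gauss_pdf_continuous t : continuous gauss_pdf t.
Proof.
  apply: (ex_derive_continuous (K := R_AbsRing) (V := R_NormedModule)).
  rewrite /gauss_pdf; auto_derive; move: sqrt_2PI_pos; lra.
Qed.

Lemma is_derive_Phi x : is_derive Phi x (gauss_pdf x).
Proof.
  rewrite -[gauss_pdf x]Rplus_0_l.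
  apply: is_derive_plus; first exact: is_derive_const.
  apply: is_derive_RInt; last exact: gauss_pdf_continuous.
  apply: filter_forall => b; apply: RInt_correct.
  apply: ex_RInt_continuous => z _; exact: gauss_pdf_continuous.
Qed.

Lemma Phi_increasing x y : x < y -> Phi x < Phi y.
Proof.
  move=> Hxy; apply: (incr_function Phi m_infty p_infty gauss_pdf) => // t _ _.
  - exact: is_derive_Phi.
  - exact: gauss_pdf_pos.
Qed.

Lemma Phi_inj x y : Phi x = Phi y -> x = y.
Proof.
  move=> Exy; case: (Rtotal_order x y) => [/Phi_increasing | [//|/Phi_increasing]]; lra.
Qed.

Lemma Phi_opp y : Phi (- y) = 1 - Phi y.
Proof.
  have ex_int a b : ex_RInt gauss_pdf a b.
  { apply: ex_RInt_continuous => z _; exact: gauss_pdf_continuous. }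
  have := RInt_comp_lin gauss_pdf (-1) 0 0 y (ex_int _ _).
  have -> : -1 * 0 + 0 = 0 by ring.
  have -> : -1 * y + 0 = - y by ring.
  rewrite (RInt_ext _ (fun t => opp (gauss_pdf t))); last first.
  { move=> t _; rewrite /scal /= /mult /opp /= (_ : -1 * t + 0 = - t); last ring.
    rewrite gauss_pdf_opp; ring. }
  rewrite RInt_opp // /Phi => <-; rewrite /opp /=; lra.
Qed.

Lemma gauss_pdf_div_exp a k : 0 < k ->
  gauss_pdf a / k = exp (- (a ^ 2 + 2 * ln k) / 2) / sqrt (2 * PI).
Proof.
  move=> Hk; have := sqrt_2PI_pos => Hs.
  rewrite /gauss_pdf (_ : - (a ^ 2 + 2 * ln k) / 2 = - a ^ 2 / 2 + - ln k); last lra.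
  rewrite exp_plus exp_Ropp exp_ln //; field; lra.
Qed.

Lemma is_min_on_ext (f g : R -> R) a b x :
  (forall t, f t = g t) -> is_min_on f a b x -> is_min_on g a b x.
Proof. move=> Efg [Hx Hmin]; split=> // y Hy; rewrite -!Efg; exact: Hmin. Qed.

Lemma is_min_on_eq_of_deriv_sign (f f' : R -> R) a b r x :
  (forall t, is_derive f t (f' t)) -> a <= r <= b ->
  (forall t, a < t < r -> f' t < 0) -> (forall t, r < t < b -> 0 < f' t) ->
  is_min_on f a b x -> x = r.
Proof.
  move=> Df Hr Hneg Hpos [Hx Hmin].
  have Df' t : derivable_pt_lim f t (f' t) by apply/is_derive_Reals.
  have := Hmin r Hr.
  case: (Rtotal_order x r) => [Hlt | [// | Hlt]] Hle.
  - have [c [Ec Hc]] := MVT_cor2 f f' x r Hlt (fun c _ => Df' c).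
    have := Hneg c ltac:(lra); nra.
  - have [c [Ec Hc]] := MVT_cor2 f f' r x Hlt (fun c _ => Df' c).
    have := Hpos c ltac:(lra); nra.
Qed.

Lemma quadratic_sign_right_of_root A B C a r x :
  0 < A -> a < r -> A * a ^ 2 + B * a + C < 0 -> A * r ^ 2 + B * r + C = 0 ->
  a <= x ->
  (x < r -> A * x ^ 2 + B * x + C < 0) /\ (r < x -> 0 < A * x ^ 2 + B * x + C).
Proof.
  move=> HA Har Ha Hr Hx.
  have factor t : A * t ^ 2 + B * t + C = (t - r) * (A * (t + r) + B)
    by rewrite -[LHS]Rminus_0_r -Hr; ring.
  have Hslope : 0 < A * (x + r) + B.
  { have : 0 < A * (a + r) + B by move: Ha; rewrite factor; nra.
    nra. }
  rewrite factor; split=> ?; nra.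
Qed.

Section GaussianMixture.

Variables mu_m mu_p K : R.
Hypothesis mu_m_lt_mu_p : mu_m < mu_p.
Hypothesis K_gt1 : 1 < K.

Lemma K2_lnK_pos : 0 < K ^ 2 * ln K.
Proof. apply: Rmult_lt_0_compat; [nra | rewrite -ln_1; apply: ln_increasing; lra]. Qed.

(* [2 K^2] times the difference of the exponents of the two densities in [R_rob_deriv]. *)
Definition rob_quad eps th :=
  K ^ 2 * (th - mu_m - eps) ^ 2 - (th + eps - mu_p) ^ 2 - 2 * K ^ 2 * ln K.

Definition R_rob_deriv eps th :=
  / 2 * (gauss_pdf ((th + eps - mu_p) / K) / K - gauss_pdf (th - eps - mu_m)).

Lemma is_derive_R_rob eps th :
  is_derive (R_rob mu_m mu_p K eps) th (R_rob_deriv eps th).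
Proof.
  have DPhi g g' : is_derive g th g' ->
      is_derive (fun t => Phi (g t)) th (g' * gauss_pdf (g th)).
  { move=> Dg; apply: (is_derive_comp Phi g) => //; exact: is_derive_Phi. }
  have Dl : is_derive (fun t => (t + eps - mu_p) / K) th (/ K).
  { auto_derive=> //; field; lra. }
  have Dr : is_derive (fun t => t - eps - mu_m) th 1.
  { by auto_derive=> //; ring. }
  have -> : R_rob_deriv eps th = / 2 * (/ K * gauss_pdf ((th + eps - mu_p) / K))
      + / 2 * (0 - 1 * gauss_pdf (th - eps - mu_m)).
  { rewrite /R_rob_deriv; field; lra. }
  apply: is_derive_plus; apply: is_derive_scal; first exact: DPhi.
  apply: is_derive_minus; [exact: is_derive_const | exact: DPhi].
Qed.

Lemma R_rob_deriv_sign eps th :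
  (rob_quad eps th < 0 -> R_rob_deriv eps th < 0) /\
  (0 < rob_quad eps th -> 0 < R_rob_deriv eps th).
Proof.
  set a := (th + eps - mu_p) / K; set b := th - eps - mu_m.
  have Equad : rob_quad eps th = K ^ 2 * (b ^ 2 - (a ^ 2 + 2 * ln K)).
  { rewrite /rob_quad /a /b; field; lra. }
  have Ederiv : R_rob_deriv eps th =
      / 2 * ((exp (- (a ^ 2 + 2 * ln K) / 2) - exp (- b ^ 2 / 2)) / sqrt (2 * PI)).
  { rewrite /R_rob_deriv -/a -/b gauss_pdf_div_exp; last lra.
    rewrite /gauss_pdf; field; move: sqrt_2PI_pos; lra. }
  have Hs := Rinv_0_lt_compat _ sqrt_2PI_pos; have HK2 : 0 < K ^ 2 by nra.
  rewrite Equad Ederiv /Rdiv; split=> Hq.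
  - have /exp_increasing : - (a ^ 2 + 2 * ln K) / 2 < - b ^ 2 / 2 by nra.
    nra.
  - have /exp_increasing : - b ^ 2 / 2 < - (a ^ 2 + 2 * ln K) / 2 by nra.
    nra.
Qed.

Lemma rob_quad_continuous eps : continuity (rob_quad eps).
Proof. move=> x; rewrite /rob_quad; reg. Qed.

(* [K <= B_K(eps)] with the exponential and the division cleared. *)
Definition admissible eps :=
  0 <= eps /\ eps * (K + 1) <= mu_p - mu_m /\ 2 * ln K <= (mu_p - mu_m - 2 * eps) ^ 2.

Lemma admissible_of_le_BK eps :
  0 <= eps <= (mu_p - mu_m) / 2 -> le_BK (mu_p - mu_m) eps K -> admissible eps.
Proof.
  move=> He [HB_exp HB_div]; split; [lra | split].
  - case: (Rle_lt_or_eq_dec 0 eps) => [| eps_pos | <-]; [lra | | lra].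
    have := Rmult_le_compat_l eps _ _ (Rlt_le _ _ eps_pos) (HB_div eps_pos).
    rewrite (_ : eps * ((mu_p - mu_m) / eps - 1) = mu_p - mu_m - eps); [lra | field; lra].
  - have := ln_le K _ ltac:(lra) HB_exp; rewrite ln_exp; lra.
Qed.

Lemma admissible_0 eps : admissible eps -> admissible 0.
Proof.
  move=> [He [HKe Hln]]; split; [lra | split; [lra |]].
  apply: Rle_trans Hln _; apply: pow_incr; nra.
Qed.

Lemma rob_quad_at_mu_m eps : admissible eps -> rob_quad eps mu_m < 0.
Proof.
  move=> [He [HKe _]]; have := K2_lnK_pos; rewrite /rob_quad.
  have : (K * eps) ^ 2 <= (mu_p - mu_m - eps) ^ 2 by apply: pow_incr; nra.
  lra.
Qed.

Lemma rob_quad_root eps : admissible eps ->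
  exists r, mu_m + eps < r <= mu_p - eps /\ rob_quad eps r = 0 /\
    (forall t, mu_m <= t -> t < r -> rob_quad eps t < 0) /\
    (forall t, r < t -> 0 < rob_quad eps t).
Proof.
  move=> Ha; have Hm := rob_quad_at_mu_m eps Ha; case: Ha => [He [HKe Hln]].
  have HlnK := K2_lnK_pos.
  have Hleft : rob_quad eps (mu_m + eps) < 0.
  { rewrite /rob_quad (_ : mu_m + eps - mu_m - eps = 0); [nra | ring]. }
  have Hright : 0 <= rob_quad eps (mu_p - eps).
  { rewrite /rob_quad (_ : mu_p - eps + eps - mu_p = 0); last ring.
    rewrite (_ : mu_p - eps - mu_m - eps = mu_p - mu_m - 2 * eps); [nra | ring]. }
  have Hlt : mu_m + eps < mu_p - eps by nra.
  have [r [Hr Qr]] : exists r, mu_m + eps <= r <= mu_p - eps /\ rob_quad eps r = 0.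
  { case: (Rle_lt_or_eq_dec _ _ Hright) => [Hpos | Hzero].
    - have [r Hr] := IVT _ _ _ (rob_quad_continuous eps) Hlt Hleft Hpos; by exists r.
    - by exists (mu_p - eps); split; [lra |]. }
  have Hr' : mu_m + eps < r.
  { case: (Rle_lt_or_eq_dec _ _ (proj1 Hr)) => // Heq; rewrite Heq in Hleft; lra. }
  have Expand t : rob_quad eps t = (K ^ 2 - 1) * t ^ 2
      + (2 * (mu_p - eps) - 2 * K ^ 2 * (mu_m + eps)) * t
      + (K ^ 2 * (mu_m + eps) ^ 2 - (mu_p - eps) ^ 2 - 2 * K ^ 2 * ln K).
  { rewrite /rob_quad; ring. }
  have Sign t : mu_m <= t -> (t < r -> rob_quad eps t < 0) /\ (r < t -> 0 < rob_quad eps t).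
  { rewrite !Expand in Hm Qr *; apply: quadratic_sign_right_of_root => //; nra. }
  exists r; split; [lra | split => //; split].
  - by move=> t Ht; case: (Sign t Ht).
  - by move=> t Ht; case: (Sign t ltac:(lra)) => _; apply.
Qed.

Lemma rob_quad_root_increasing e1 e2 r1 r2 :
  e1 < e2 -> mu_m + e1 < r1 -> mu_m + e2 < r2 ->
  rob_quad e1 r1 = 0 -> rob_quad e2 r2 = 0 -> r1 < r2.
Proof.
  (* A discrete implicit-function argument: both roots lie on the branch
     [K a > |b|] of the hyperbola [K^2 a^2 - b^2 = 2 K^2 ln K], along which
     moving [eps] forward forces the root forward. *)
  move=> He H1 H2; rewrite /rob_quad => Q1 Q2; apply: Rnot_le_lt => Hr.
  have Babs a b : 0 < a -> K ^ 2 * a ^ 2 - b ^ 2 - 2 * K ^ 2 * ln K = 0 ->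
      Rabs b < K * a.
  { move=> Ha Q; rewrite -(Rabs_pos_eq (K * a)); last nra.
    apply: Rsqr_lt_abs_0; rewrite /Rsqr; have := K2_lnK_pos; lra. }
  have B1 := Babs _ _ (ltac:(lra) : 0 < r1 - mu_m - e1) Q1.
  have B2 := Babs _ _ (ltac:(lra) : 0 < r2 - mu_m - e2) Q2.
  set a1 := r1 - mu_m - e1 in Q1 B1; set a2 := r2 - mu_m - e2 in Q2 B2.
  set b1 := r1 + e1 - mu_p in Q1 B1; set b2 := r2 + e2 - mu_p in Q2 B2.
  set q := r1 - r2; set p := e2 - e1.
  have Key : K ^ 2 * ((q + p) * (a1 + a2)) = (q - p) * (b1 + b2).
  { have -> : q + p = a1 - a2 by rewrite /q /p /a1 /a2; ring.
    have -> : q - p = b1 - b2 by rewrite /q /p /b1 /b2; ring.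
    apply: Rminus_diag_uniq.
    have -> : K ^ 2 * ((a1 - a2) * (a1 + a2)) - (b1 - b2) * (b1 + b2)
        = (K ^ 2 * a1 ^ 2 - b1 ^ 2 - 2 * K ^ 2 * ln K)
          - (K ^ 2 * a2 ^ 2 - b2 ^ 2 - 2 * K ^ 2 * ln K) by ring.
    by rewrite Q1 Q2 Rminus_0_r. }
  have Hqp : Rabs (q - p) <= q + p by apply: Rabs_le; rewrite /q /p; lra.
  have Hb : Rabs (b1 + b2) < K * (a1 + a2).
  { apply: Rle_lt_trans (Rabs_triang _ _) _; lra. }
  have Hqp_pos : 0 < q + p by rewrite /q /p; lra.
  have Ha_pos : 0 < a1 + a2 by rewrite /a1 /a2; lra.
  have : (q - p) * (b1 + b2) < (q + p) * (K * (a1 + a2)).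
  { apply: Rle_lt_trans (Rle_abs _) _; rewrite Rabs_mult.
    apply: Rle_lt_trans (_ : _ <= (q + p) * Rabs (b1 + b2)) _.
    - apply: Rmult_le_compat_r => //; exact: Rabs_pos.
    - exact: Rmult_lt_compat_l. }
  have : 0 < (K - 1) * (K * ((q + p) * (a1 + a2))).
  { apply: Rmult_lt_0_compat; [lra | apply: Rmult_lt_0_compat; [lra | exact: Rmult_lt_0_compat]]. }
  lra.
Qed.

Lemma R_rob_min_eq eps r th :
  mu_m < r <= mu_p ->
  (forall t, mu_m <= t -> t < r -> rob_quad eps t < 0) ->
  (forall t, r < t -> 0 < rob_quad eps t) ->
  is_min_on (R_rob mu_m mu_p K eps) mu_m mu_p th -> th = r.
Proof.
  move=> Hr Hneg Hpos.
  apply: (is_min_on_eq_of_deriv_sign _ (R_rob_deriv eps)) => [t | | t Ht | t Ht].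
  - exact: is_derive_R_rob.
  - lra.
  - apply: (proj1 (R_rob_deriv_sign eps t)); apply: Hneg; lra.
  - apply: (proj2 (R_rob_deriv_sign eps t)); apply: Hpos; lra.
Qed.

Lemma R_rob_argmin eps : admissible eps ->
  exists r, mu_m + eps < r <= mu_p - eps /\ rob_quad eps r = 0 /\
    (forall t, mu_m <= t -> rob_quad eps t < 0 -> t < r) /\
    (forall th, is_min_on (R_rob mu_m mu_p K eps) mu_m mu_p th -> th = r).
Proof.
  move=> Ad; have [r [Hr [Qr [Neg Pos]]]] := rob_quad_root eps Ad.
  have [He _] := Ad.
  exists r; do 2!split => //; split.
  - move=> t Ht Qt; apply: Rnot_le_lt => Hrt.
    case: (Rle_lt_or_eq_dec _ _ Hrt) => [/Pos | Ert]; [lra | subst t; lra].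
  - move=> th; apply: (R_rob_min_eq eps r th _ Neg Pos); lra.
Qed.

Lemma fair_threshold_eq th :
  e_plus mu_p K th = e_minus mu_m th -> th - mu_p = - K * (th - mu_m).
Proof.
  rewrite /e_plus /e_minus -Phi_opp => /Phi_inj Eth.
  have -> : th - mu_p = K * ((th - mu_p) / K) by field; lra.
  rewrite Eth; ring.
Qed.

Lemma fair_threshold_ge eps th :
  admissible eps -> th - mu_p = - K * (th - mu_m) -> mu_m + eps <= th.
Proof. move=> [_ [HKe _]] Eth; nra. Qed.

Lemma rob_quad0_fair th : th - mu_p = - K * (th - mu_m) -> rob_quad 0 th < 0.
Proof. by move=> Eth; rewrite /rob_quad Rplus_0_r Rminus_0_r Eth; have := K2_lnK_pos; nra. Qed.

End GaussianMixture.

Lemma R_nat_R_rob0 mu_m mu_p K th :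
  R_nat mu_m mu_p K th = R_rob mu_m mu_p K 0 th.
Proof. by rewrite /R_nat /R_rob /e_plus /e_minus Rplus_0_r Rminus_0_r. Qed.

Theorem theorem6p1 (mu_m mu_p K : R) :
  mu_m < mu_p -> 1 < K ->
  (forall eps theta_f theta_s theta_r : R,
     0 <= eps <= (mu_p - mu_m) / 2 ->
     le_BK (mu_p - mu_m) eps K ->
     (mu_m <= theta_f <= mu_p /\ e_plus mu_p K theta_f = e_minus mu_m theta_f) ->
     is_min_on (R_nat mu_m mu_p K) mu_m mu_p theta_s ->
     is_min_on (R_rob mu_m mu_p K eps) mu_m mu_p theta_r ->
     mu_m + eps <= theta_f /\ theta_f <= theta_s /\
     theta_s <= theta_r /\ theta_r <= mu_p - eps) /\
  (forall eps1 eps2 theta1 theta2 : R,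
     0 <= eps1 <= (mu_p - mu_m) / 2 -> le_BK (mu_p - mu_m) eps1 K ->
     0 <= eps2 <= (mu_p - mu_m) / 2 -> le_BK (mu_p - mu_m) eps2 K ->
     eps1 < eps2 ->
     is_min_on (R_rob mu_m mu_p K eps1) mu_m mu_p theta1 ->
     is_min_on (R_rob mu_m mu_p K eps2) mu_m mu_p theta2 ->
     theta1 < theta2).
Proof.
  move=> Hmu HK; split.
  - move=> eps tf ts tr He HB [Htf Hfair] Hs Hr.
    have Ad := admissible_of_le_BK mu_m mu_p K Hmu HK eps He HB.
    have [r0 [Hr0 [Q0 [Below0 Min0]]]] :=
      R_rob_argmin mu_m mu_p K Hmu HK 0 (admissible_0 mu_m mu_p K Hmu HK eps Ad).
    have [r [Hr' [Qr [_ Min]]]] := R_rob_argmin mu_m mu_p K Hmu HK eps Ad.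
    rewrite (Min0 ts (is_min_on_ext _ _ _ _ _ (R_nat_R_rob0 _ _ _) Hs)) (Min tr Hr).
    have Ef := fair_threshold_eq mu_m mu_p K HK tf Hfair.
    split; [exact: (fair_threshold_ge mu_m mu_p K HK eps) | split; [| split; [| lra]]].
    + apply/Rlt_le/Below0; [lra | exact: rob_quad0_fair].
    + case: (Rle_lt_or_eq_dec 0 eps (proj1 He)) => [eps_pos | eps0].
      * apply/Rlt_le/(rob_quad_root_increasing mu_m mu_p K HK 0 eps) => //; lra.
      * by subst eps; rewrite -(Min0 tr Hr) (Min tr Hr); right.
  - move=> e1 e2 t1 t2 He1 HB1 He2 HB2 He12 Ht1 Ht2.
    have [r1 [Hr1 [Q1 [_ Min1]]]] :=
      R_rob_argmin mu_m mu_p K Hmu HK e1 (admissible_of_le_BK mu_m mu_p K Hmu HK e1 He1 HB1).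
    have [r2 [Hr2 [Q2 [_ Min2]]]] :=
      R_rob_argmin mu_m mu_p K Hmu HK e2 (admissible_of_le_BK mu_m mu_p K Hmu HK e2 He2 HB2).
    rewrite (Min1 t1 Ht1) (Min2 t2 Ht2).
    apply: (rob_quad_root_increasing mu_m mu_p K HK e1 e2) => //; lra.
Qed.
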